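(* For every $(g,n)\in Q\rtimes\mathbb{Z}$ we have $\det\bigl((g,n);\tau_q\bigr)=q^{-n}$.
   Context: All representations are over $\overline{\mathbb{Q}}_\ell$, $\ell$ an odd prime. Let $q=2^f$ with $f\ge1$. Let $Q\subset \mathit{GL}_3(\mathbb{F}_4)$ be the group of matrices $g(\alpha,\beta,\gamma)=\begin{pmatrix}\alpha&\beta&\gamma\\0&\alpha^2&\beta^2\\0&0&\alpha\end{pmatrix}$ with $\alpha\in\mathbb{F}_4^\times$, $\beta,\gamma\in\mathbb{F}_4$, $\alpha\gamma^2+\alpha^2\gamma=\beta^3$. Let $Q\rtimes\mathbb{Z}$ be the semidirect product where $r\in\mathbb{Z}$ acts by $g(\alpha,\beta,\gamma)\mapsto g(\alpha^{q^r},\beta^{q^r},\gamma^{q^r})$. Fix $\bar\zeta_3\in\mathbb{F}_4\setminus\mathbb{F}_2$. Let $Q_8=\{g(1,\beta,\gamma)\in Q\}$; $C_4\subset Q_8$ the cyclic subgroup of order 4 generated by $g(1,1,\bar\zeta_3)$; $Z=\{g(1,0,0),g(1,0,1)\}$; $C_3=\{g(\alpha,0,0)\}$; $C_6=Z\times C_3$. Fix a faithful character $\phi$ of $C_4$; let $\tau$ be the unique irreducible two-dimensional representation of $Q$ with $\tau|_Z\simeq(\phi|_Z)^{\oplus2}$ and $\operatorname{Tr}\tau(g(\alpha,0,0))=-1$ for $\alpha\in\mathbb{F}_4\setminus\mathbb{F}_2$. Fix $(-2)^{1/2}\in\overline{\mathbb{Q}}_\ell$, with $(-2)^{m/2}=((-2)^{1/2})^m$.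 The representation $\tau_q$ of $Q\rtimes\mathbb{Z}$ is defined as follows. If $f$ is even, $Q\rtimes\mathbb{Z}=Q\times\mathbb{Z}$ and $\tau_q$ is the representation with $\tau_q|_Q\simeq\tau$ and $(g(1,0,0),1)$ acting by the scalar $(-2)^{-f/2}$. If $f$ is odd: let $C\subset Q_8\rtimes\mathbb{Z}$ be the subgroup of $(g,n)$ with $g\in C_4$ if $n$ even and $g\in Q_8\setminus C_4$ if $n$ odd; fix $\eta$ with $\eta^2+(-2)^{(f+1)/2}\eta+q=0$; let $\phi_1$ be the character of $C$ with $\phi_1((g(1,\bar\zeta_3,\bar\zeta_3),1))=\eta q^{-1}$, $\phi_1((g(1,0,0),2))=-q^{-1}$; let $\phi_2$ be the character of $C_6\rtimes\mathbb{Z}$ with $\phi_2|_{C_6}=\phi|_Z\otimes1_{C_3}$ and $\phi_2((g(1,0,0),1))=(-2)^{f/2}q^{-1}$; there is a surjective $Q\rtimes\mathbb{Z}$-homomorphism $\Psi\colon\operatorname{Ind}_C^{Q\rtimes\mathbb{Z}}\phi_1\to\operatorname{Ind}_{C_6\rtimes\mathbb{Z}}^{Q\rtimes\mathbb{Z}}\phi_2$, unique up to scalar, and $\tau_q:=\ker\Psi$ (two-dimensional). *)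

From HB Require Import structures.
From mathcomp Require Import all_boot all_order all_algebra all_field.
Set Implicit Arguments. Unset Strict Implicit. Unset Printing Implicit Defensive.
Import Order.TTheory GRing.Theory Num.Theory.
Local Open Scope ring_scope.

(* The finite field F_4 is taken to be an arbitrary finite field F4 with     *)
(* #|F4| = 4 (unique up to isomorphism).  Representations are over an        *)
(* arbitrary algebraically closed field F of characteristic 0 (this covers   *)
(* Qbar_ell).                                                                *)

Definition gm (F4 : finFieldType) (a b c : F4) : 'M[F4]_3 :=
  \matrix_(i < 3, j < 3)
    nth 0 (nth [::] [:: [:: a; b; c]; [:: 0; a ^+ 2; b ^+ 2]; [:: 0; 0; a]] i) j.

Definition inQ (F4 : finFieldType) (A : 'M[F4]_3) : Prop :=
  exists a b c : F4, [/\ a != 0, a * c ^+ 2 + a ^+ 2 * c = b ^+ 3 & A = gm a b c].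

Definition inQ8 (F4 : finFieldType) (A : 'M[F4]_3) : Prop :=
  inQ A /\ exists b c : F4, A = gm 1 b c.

Definition inC4 (F4 : finFieldType) (zeta : F4) (A : 'M[F4]_3) : Prop :=
  exists k : nat, A = gm 1 1 zeta ^+ k.

Definition inZ (F4 : finFieldType) (A : 'M[F4]_3) : Prop :=
  A = gm 1 0 0 \/ A = gm 1 0 1.

Definition inC3 (F4 : finFieldType) (A : 'M[F4]_3) : Prop :=
  exists a : F4, a != 0 /\ A = gm a 0 0.

Definition inC6 (F4 : finFieldType) (A : 'M[F4]_3) : Prop :=
  exists z c, [/\ inZ z, inC3 c & A = z *m c].

(* The action of r in Z on F_4:  x |-> x^(q^r), q = 2^f.  For r < 0 this is
   the inverse of x |-> x^(q^|r|); since x^4 = x on F_4, the Frobenius of F_4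
   is an involution, so this inverse is again x |-> x^(2^(f|r|)). *)
Definition frob (F4 : finFieldType) (f : nat) (r : int) (x : F4) : F4 :=
  x ^+ (2 ^ (f * `|r|)%N).

Definition frobmx (F4 : finFieldType) (f : nat) (r : int) (A : 'M[F4]_3) :=
  map_mx (frob f r) A.

Definition inG (F4 : finFieldType) (x : 'M[F4]_3 * int) : Prop := inQ x.1.

Definition gmul (F4 : finFieldType) (f : nat) (x y : 'M[F4]_3 * int)
  : 'M[F4]_3 * int :=
  (x.1 *m frobmx f x.2 y.1, x.2 + y.2).

Definition gone (F4 : finFieldType) : 'M[F4]_3 * int := (1%:M, 0).

Definition is_character (T : Type) (R : fieldType) (H : T -> Prop)
    (mul : T -> T -> T) (chi : T -> R) : Prop :=
  (forall x, H x -> chi x != 0) /\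
  (forall x y, H x -> H y -> chi (mul x y) = chi x * chi y).

Definition faithful_char_C4 (F4 : finFieldType) (R : fieldType) (zeta : F4)
    (phi : 'M[F4]_3 -> R) : Prop :=
  is_character (R := R) (@inC4 F4 zeta) (@mulmx F4 3 3 3) phi /\
  (forall A B, inC4 zeta A -> inC4 zeta B -> phi A = phi B -> A = B).

Definition is_repQ (F4 : finFieldType) (R : fieldType) (d : nat)
    (rho : 'M[F4]_3 -> 'M[R]_d) : Prop :=
  rho 1%:M = 1%:M /\
  (forall A B, inQ A -> inQ B -> rho (A *m B) = rho A *m rho B).

Definition is_repG (F4 : finFieldType) (R : fieldType) (f d : nat)
    (rho : 'M[F4]_3 * int -> 'M[R]_d) : Prop :=
  rho (gone F4) = 1%:M /\
  (forall x y, inG x -> inG y -> rho (gmul f x y) = rho x *m rho y).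

Definition irreducibleQ (F4 : finFieldType) (R : fieldType) (d : nat)
    (rho : 'M[F4]_3 -> 'M[R]_d) : Prop :=
  (0 < d)%N /\
  forall U : 'M[R]_d, (forall A, inQ A -> (U *m rho A <= U)%MS) ->
    U = 0 \/ row_full U.

Definition is_tau (F4 : finFieldType) (R : fieldType)
    (phi : 'M[F4]_3 -> R) (tau : 'M[F4]_3 -> 'M[R]_2) : Prop :=
  [/\ is_repQ tau, irreducibleQ tau,
      (exists P : 'M[R]_2, P \in unitmx /\
         forall z, inZ z -> tau z = invmx P *m (phi z)%:M *m P)
    & forall a : F4, a != 0 -> a != 1 -> \tr (tau (gm a 0 0)) = -1].

(* tau_q for f even: tau_q|_Q ~ tau and (g(1,0,0),1) acts by (-2)^{-f/2},
   where (-2)^{m/2} := s^m for the fixed square root s of -2 *)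
Definition is_tau_q_even (F4 : finFieldType) (R : fieldType) (f : nat)
    (phi : 'M[F4]_3 -> R) (s : R) (rho : 'M[F4]_3 * int -> 'M[R]_2) : Prop :=
  [/\ is_repG f rho,
      exists tau, is_tau phi tau /\
        exists P : 'M[R]_2, P \in unitmx /\
          forall A, inQ A -> rho (A, 0) = invmx P *m tau A *m P
    & rho (gm 1 0 0, 1) = (s ^ (- (f%:Z)))%:M].

(* Ind_H^G chi realised as { v : G -> R | v(h x) = chi(h) v(x) }, G acting by
   right translation (x . v)(y) = v(y x); functions are required to vanish
   outside G. *)
Definition inInd (F4 : finFieldType) (R : fieldType) (f : nat)
    (H : 'M[F4]_3 * int -> Prop) (chi : 'M[F4]_3 * int -> R)
    (v : 'M[F4]_3 * int -> R) : Prop :=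
  (forall x, ~ inG x -> v x = 0) /\
  (forall h x, H h -> inG x -> v (gmul f h x) = chi h * v x).

Definition gact (F4 : finFieldType) (R : Type) (f : nat)
    (g : 'M[F4]_3 * int) (v : 'M[F4]_3 * int -> R) : 'M[F4]_3 * int -> R :=
  fun y => v (gmul f y g).

Definition inC (F4 : finFieldType) (zeta : F4) (x : 'M[F4]_3 * int) : Prop :=
  inQ8 x.1 /\ (if odd `|x.2|%N then ~ inC4 zeta x.1 else inC4 zeta x.1).

Definition inC6Z (F4 : finFieldType) (x : 'M[F4]_3 * int) : Prop := inC6 x.1.

Definition is_phi1 (F4 : finFieldType) (R : fieldType) (f : nat) (zeta : F4)
    (eta : R) (phi1 : 'M[F4]_3 * int -> R) : Prop :=
  let q : R := (2 ^ f)%:R in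
  [/\ is_character (inC zeta) (gmul f) phi1,
      phi1 (gm 1 zeta zeta, 1) = eta / q
    & phi1 (gm 1 0 0, 2) = - q^-1].

Definition is_phi2 (F4 : finFieldType) (R : fieldType) (f : nat)
    (phi : 'M[F4]_3 -> R) (s : R) (phi2 : 'M[F4]_3 * int -> R) : Prop :=
  let q : R := (2 ^ f)%:R in
  [/\ is_character (@inC6Z F4) (gmul f) phi2,
      (forall z c, inZ z -> inC3 c -> phi2 (z *m c, 0) = phi z)
    & phi2 (gm 1 0 0, 1) = s ^ (f%:Z) / q].

Definition is_Psi (F4 : finFieldType) (R : fieldType) (f : nat) (zeta : F4)
    (phi1 phi2 : 'M[F4]_3 * int -> R)
    (Psi : ('M[F4]_3 * int -> R) -> ('M[F4]_3 * int -> R)) : Prop :=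
  let I1 := inInd f (inC zeta) phi1 in
  let I2 := inInd f (@inC6Z F4) phi2 in
  [/\ forall v, I1 v -> I2 (Psi v),
      forall a v w, I1 v -> I1 w ->
        Psi (fun y => a * v y + w y) = (fun y => a * Psi v y + Psi w y),
      forall g v, inG g -> I1 v -> Psi (gact f g v) = gact f g (Psi v)
    & forall w, I2 w -> exists2 v, I1 v & Psi v = w].

(* tau_q := ker Psi ; b is a basis of ker Psi *)
Definition is_ker_basis (F4 : finFieldType) (R : fieldType) (f : nat)
    (zeta : F4) (phi1 : 'M[F4]_3 * int -> R)
    (Psi : ('M[F4]_3 * int -> R) -> ('M[F4]_3 * int -> R))
    (b : 'I_2 -> 'M[F4]_3 * int -> R) : Prop :=
  let K v := inInd f (inC zeta) phi1 v /\ Psi v = (fun _ => 0) in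
  [/\ forall i, K (b i),
      forall c : 'I_2 -> R, (fun y => \sum_i c i * b i y) = (fun _ => 0) ->
        forall i, c i = 0
    & forall v, K v -> exists c : 'I_2 -> R, v = (fun y => \sum_i c i * b i y)].

Definition is_action_matrix (F4 : finFieldType) (R : fieldType) (f : nat)
    (b : 'I_2 -> 'M[F4]_3 * int -> R) (g : 'M[F4]_3 * int) (M : 'M[R]_2)
    : Prop :=
  forall j, gact f g (b j) = (fun y => \sum_i M i j * b i y).

From HB Require Import structures.
From mathcomp Require Import all_boot all_order all_algebra all_field.
From Stdlib Require Import ClassicalEpsilon FunctionalExtensionality Classical_Prop.
From mathcomp Require Import ring zify.
Set Implicit Arguments. Unset Strict Implicit. Unset Printing Implicit Defensive.
Import GRing.Theory.
Local Open Scope ring_scope.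

(* The determinant of tau_q is a character of Q x| Z.  Since Q = Q_8 x| C_3 is
   SL_2(F_3), whose abelianization is generated by c = g(zeta,0,0), such a
   character is determined by its values at c and at (1, 1), and equals
   det (1, 1) ^ n at (h, n) once it is trivial at c.

   For f even, tau_q restricts to tau on Q and det tau(c) = 1 because tau(c)
   has order 3 and trace -1; (1, 1) acts by the scalar (-2)^(-f/2), whose
   determinant is 1/q.

   For f odd, tau_q is realized on ker Psi.  The element (1, 2) is central and
   lies in C, so it acts by phi_1((1, 2)) = -1/q and t = tau_q(1, 1) satisfies
   t^2 = -1/q.  Conjugation by (1, 1) maps c to c^2, which forces
   det tau_q(c) = 1.  Finally det t = 1/q unless t is scalar; a scalar t would
   give tau_q(c) = tau_q(c^2), hence a trivial action of Q on ker Psi, which is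
   impossible since g(1,1,zeta) lies in C and phi_1 is not trivial on it. *)

Section F4Arith.
Variable F4 : finFieldType.
Hypothesis card4 : #|F4| = 4%N.

Lemma F4_expr4 (x : F4) : x ^+ 4 = x.
Proof. by rewrite -{2}(expf_card x) card4. Qed.

Lemma F4_sqrK (x : F4) : x ^+ 2 ^+ 2 = x.
Proof. by rewrite -exprM F4_expr4. Qed.

Lemma F4_pchar2 : 2%N \in [pchar F4].
Proof.
have := F4_expr4 (-1); rewrite -signr_odd /= expr0 => m1.
by rewrite inE /= -[2%:R]/(1 + 1 : F4) {1}m1 addNr.
Qed.

Lemma F4_addxx (x : F4) : x + x = 0.
Proof. exact: (addrr_pchar2 F4_pchar2). Qed.

Lemma F4_sqrD (x y : F4) : (x + y) ^+ 2 = x ^+ 2 + y ^+ 2.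
Proof. by rewrite sqrrD (mulrn_pchar F4_pchar2) addr0. Qed.

Lemma F4_expr3 (x : F4) : x != 0 -> x ^+ 3 = 1.
Proof. by move=> x0; apply: (mulfI x0); rewrite -exprS F4_expr4 mulr1. Qed.

Lemma F4_sqr_add0 (c : F4) : c ^+ 2 + c = 0 -> c = 0 \/ c = 1.
Proof.
move=> cc; have : c * (c + 1) == 0 by rewrite mulrDr mulr1 -expr2 cc.
rewrite mulf_eq0 addr_eq0 (oppr_pchar2 F4_pchar2).
by case/orP => /eqP; [left | right].
Qed.

Variable zeta : F4.
Hypotheses (zeta0 : zeta != 0) (zeta1 : zeta != 1).

Lemma F4_zeta_sqr : zeta ^+ 2 + zeta = 1.
Proof.
have : (zeta - 1) * (zeta ^+ 2 + zeta + 1) = 0.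
  transitivity (zeta ^+ 3 - 1); first by ring.
  by rewrite F4_expr3 // subrr.
move/eqP; rewrite mulf_eq0 subr_eq0 (negbTE zeta1) /= addr_eq0.
by rewrite (oppr_pchar2 F4_pchar2) => /eqP.
Qed.

Lemma F4_zeta_cases (x : F4) : [\/ x = 0, x = 1, x = zeta | x = zeta ^+ 2].
Proof.
suff : x \in [:: 0; 1; zeta; zeta ^+ 2].
  by rewrite !inE => /or4P [] /eqP ->; constructor.
apply: contraT => xN.
have zz := F4_zeta_sqr.
have z21 : zeta ^+ 2 != 1.
  by apply: contra zeta0 => /eqP z2; apply/eqP/(addrI 1); rewrite -{1}z2 zz addr0.
have zz2 : zeta != zeta ^+ 2.
  by apply/eqP=> z2; move: zz; rewrite -z2 F4_addxx => /eqP; rewrite eq_sym oner_eq0.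
have u : uniq [:: x; 0; 1; zeta; zeta ^+ 2].
  by rewrite /= xN !inE !negb_or eq_sym oner_eq0 !(eq_sym 0) zeta0 expf_neq0
    // !(eq_sym 1) zeta1 z21 zz2.
by have := max_card (mem [:: x; 0; 1; zeta; zeta ^+ 2]); rewrite card4 (card_uniqP u).
Qed.

Lemma F4_sqr_add1 (c : F4) : c ^+ 2 + c = 1 -> c = zeta \/ c = zeta ^+ 2.
Proof.
move=> cc; have : (c - zeta) * (c - zeta ^+ 2) == 0.
  have -> : (c - zeta) * (c - zeta ^+ 2) = c ^+ 2 - (zeta ^+ 2 + zeta) * c + zeta ^+ 3.
    by ring.
  by rewrite F4_zeta_sqr mul1r (GRing.subr_pchar2 F4_pchar2) cc F4_expr3 // F4_addxx.
by rewrite mulf_eq0 !subr_eq0 => /orP [] /eqP; [left | right].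
Qed.

End F4Arith.

Lemma gm1 (F4 : finFieldType) : @gm F4 1 0 0 = 1%:M.
Proof.
apply/matrixP => i j; rewrite !mxE.
by case: i j => [[|[|[|?]]] ?] [[|[|[|?]]] ?] //=; rewrite ?expr1n ?expr0n.
Qed.

Lemma mul_gm (F4 : finFieldType) (card4 : #|F4| = 4%N) (a b c a' b' c' : F4) :
  gm a b c *m gm a' b' c' =
  gm (a * a') (a * b' + b * a' ^+ 2) (a * c' + b * b' ^+ 2 + c * a').
Proof.
apply/matrixP => i j; rewrite !mxE !big_ord_recl big_ord0 !mxE.
case: i j => [[|[|[|?]]] ?] [[|[|[|?]]] ?] //=; rewrite ?mul0r ?mulr0 ?add0r ?addr0 //.
all: try ring.
by rewrite F4_sqrD // !exprMn -exprD F4_expr4.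
Qed.

Lemma odd_absz_add (r s : int) : odd `|r + s| = odd `|r| (+) odd `|s|.
Proof.
rewrite -[odd `|r + s|]negbK -[odd `|r|]negbK -[odd `|s|]negbK -!eqb0 -!modn2.
by case: eqP; case: eqP; case: eqP => /= *; lia.
Qed.

Section Frobenius.
Variable F4 : finFieldType.
Hypothesis card4 : #|F4| = 4%N.
Variable f : nat.

Local Notation Frob2 := (pFrobenius_aut (F4_pchar2 card4)).

Lemma expr_exp2 k (x : F4) : x ^+ (2 ^ k) = if odd k then x ^+ 2 else x.
Proof.
elim: k => [|k IH]; first by rewrite expr1.
by rewrite expnS mulnC exprM IH /=; case: (odd k); rewrite //= F4_sqrK.
Qed.

Lemma frobE r (x : F4) : frob f r x = if odd (f * `|r|) then x ^+ 2 else x.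
Proof. exact: expr_exp2. Qed.

Lemma frobmxE r (A : 'M[F4]_3) :
  frobmx f r A = if odd (f * `|r|) then map_mx Frob2 A else A.
Proof.
by apply/matrixP => i j; rewrite /frobmx; case: ifP => h; rewrite !mxE frobE h.
Qed.

Lemma map_Frob2K (A : 'M[F4]_3) : map_mx Frob2 (map_mx Frob2 A) = A.
Proof. by apply/matrixP => i j; rewrite !mxE !pFrobenius_autE F4_sqrK. Qed.

Lemma frobmxM r (A B : 'M[F4]_3) :
  frobmx f r (A *m B) = frobmx f r A *m frobmx f r B.
Proof. by rewrite !frobmxE; case: ifP => //; rewrite map_mxM. Qed.

Lemma frobmx1 r : @frobmx F4 f r 1%:M = 1%:M.
Proof. by rewrite frobmxE; case: ifP => //; rewrite map_mx1. Qed.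

Lemma frobmx0 (A : 'M[F4]_3) : frobmx f 0 A = A.
Proof. by rewrite frobmxE muln0. Qed.

Lemma frobmxD r s (A : 'M[F4]_3) :
  frobmx f r (frobmx f s A) = frobmx f (r + s) A.
Proof.
rewrite !frobmxE !oddM odd_absz_add.
by case: (odd f); case: (odd `|r|); case: (odd `|s|); rewrite /= ?map_Frob2K.
Qed.

Lemma frobmxK r (A : 'M[F4]_3) : frobmx f r (frobmx f r A) = A.
Proof.
rewrite !frobmxE oddM.
by case: (odd f); case: (odd `|r|); rewrite /= ?map_Frob2K.
Qed.

Lemma frobmx_gm r (a b c : F4) :
  frobmx f r (gm a b c) = gm (frob f r a) (frob f r b) (frob f r c).
Proof.
have frob0 : frob f r (0 : F4) = 0 by rewrite frobE; case: ifP; rewrite ?expr0n.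
apply/matrixP => i j; rewrite !mxE.
case: i j => [[|[|[|?]]] ?] [[|[|[|?]]] ?] //=; rewrite ?frob0 //.
all: by rewrite /frob -!exprM mulnC.
Qed.

Lemma gmulA (x y z : 'M[F4]_3 * int) :
  gmul f (gmul f x y) z = gmul f x (gmul f y z).
Proof. by rewrite /gmul /= frobmxM frobmxD mulmxA addrA. Qed.

Lemma gmulg1 (x : 'M[F4]_3 * int) : gmul f x (gone F4) = x.
Proof. by case: x => A n; rewrite /gmul /= frobmx1 mulmx1 addr0. Qed.

Lemma gmul0 (A B : 'M[F4]_3) : gmul f (A, 0) (B, 0) = (A *m B, 0).
Proof. by rewrite /gmul /= frobmx0 addr0. Qed.

Lemma gmul_split (A : 'M[F4]_3) n : gmul f (A, 0) (1%:M, n) = (A, n).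
Proof. by rewrite /gmul /= frobmx0 mulmx1 add0r. Qed.

Lemma gmul1n m n : @gmul F4 f (1%:M, m) (1%:M, n) = (1%:M, m + n).
Proof. by rewrite /gmul /= frobmx1 mulmx1. Qed.

End Frobenius.

Section QGroup.
Variable F4 : finFieldType.
Hypothesis card4 : #|F4| = 4%N.

Definition Qtriple (a b c : F4) := a != 0 /\ a * c ^+ 2 + a ^+ 2 * c = b ^+ 3.

Lemma inQP (A : 'M[F4]_3) :
  inQ A <-> exists a b c, Qtriple a b c /\ A = gm a b c.
Proof.
split; first by case=> a [b [c [? ? ?]]]; exists a, b, c.
by case=> a [b [c [[? ?] ?]]]; exists a, b, c.
Qed.

Lemma Qtriple_inQ (a b c : F4) : Qtriple a b c -> inQ (gm a b c).
Proof. by move=> abc; apply/inQP; exists a, b, c. Qed.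

Lemma Qtriple1 (b c : F4) : Qtriple 1 b c <-> c ^+ 2 + c = b ^+ 3.
Proof. by rewrite /Qtriple oner_neq0 expr1n !mul1r; split=> [[]|]. Qed.

Lemma Qtriple_mul a b c a' b' c' : Qtriple a b c -> Qtriple a' b' c' ->
  Qtriple (a * a') (a * b' + b * a' ^+ 2) (a * c' + b * b' ^+ 2 + c * a').
Proof.
move=> [a0 abc] [a'0 abc']; split; first by rewrite mulf_neq0.
have a3 := F4_expr3 card4 a0; have a'3 := F4_expr3 card4 a'0.
rewrite exprMn !F4_sqrD // !exprMn -exprD F4_expr4 //.
have -> : a * a' * (a ^+ 2 * c' ^+ 2 + b ^+ 2 * b' + c ^+ 2 * a' ^+ 2) +
   a ^+ 2 * a' ^+ 2 * (a * c' + b * b' ^+ 2 + c * a') =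
   a ^+ 3 * (a' * c' ^+ 2 + a' ^+ 2 * c') + a' ^+ 3 * (a * c ^+ 2 + a ^+ 2 * c)
   + (a * a' * b ^+ 2 * b' + a ^+ 2 * a' ^+ 2 * b * b' ^+ 2) by ring.
rewrite abc abc' a3 a'3 !mul1r.
have -> : (a * b' + b * a' ^+ 2) ^+ 3 =
  a ^+ 3 * b' ^+ 3 + (1 + 1 + 1) * (a ^+ 2 * b' ^+ 2 * b * a' ^+ 2)
  + (1 + 1 + 1) * (a * b' * b ^+ 2 * a' ^+ 4) + b ^+ 3 * (a' ^+ 3) ^+ 2 by ring.
have -> : 1 + 1 + 1 = 1 :> F4 by rewrite F4_addxx // add0r.
by rewrite F4_expr4 // a3 a'3 expr1n !mul1r mulr1; ring.
Qed.

Lemma Q_mul (A B : 'M[F4]_3) : inQ A -> inQ B -> inQ (A *m B).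
Proof.
move=> /inQP [a [b [c [abc ->]]]] /inQP [a' [b' [c' [abc' ->]]]].
by rewrite mul_gm //; apply/Qtriple_inQ/Qtriple_mul.
Qed.

Lemma Qtriple_inv a b c : Qtriple a b c ->
  Qtriple (a ^+ 2) b (a * c + a ^+ 2 * b ^+ 3).
Proof.
move=> [a0 abc]; split; first by rewrite expf_neq0.
rewrite F4_sqrD //.
have -> : a ^+ 2 * ((a * c) ^+ 2 + (a ^+ 2 * b ^+ 3) ^+ 2) +
    (a ^+ 2) ^+ 2 * (a * c + a ^+ 2 * b ^+ 3) =
    a ^+ 3 * (a * c ^+ 2 + a ^+ 2 * c) + a ^+ 3 * (a ^+ 3 * b ^+ 6 + a ^+ 3 * b ^+ 3)
  by ring.
rewrite F4_expr3 // !mul1r abc.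
by rewrite -[6%N]/(4 + 2)%N exprD F4_expr4 // -exprS addrA F4_addxx // add0r.
Qed.

Lemma mul_gm_inv a b c : Qtriple a b c ->
  gm a b c *m gm (a ^+ 2) b (a * c + a ^+ 2 * b ^+ 3) = 1%:M.
Proof.
move=> [a0 abc]; rewrite mul_gm // -gm1 -exprS F4_expr3 // F4_sqrK //.
rewrite mulrC F4_addxx //.
have -> : a * (a * c + a ^+ 2 * b ^+ 3) + b * b ^+ 2 + c * a ^+ 2
   = a ^+ 3 * b ^+ 3 + b ^+ 3 + (a ^+ 2 * c + a ^+ 2 * c) by ring.
by rewrite F4_expr3 // mul1r !F4_addxx // addr0.
Qed.

Lemma Q_inv (A : 'M[F4]_3) : inQ A ->
  exists B, [/\ inQ B, A *m B = 1%:M & B *m A = 1%:M].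
Proof.
move=> /inQP [a [b [c [abc ->]]]].
have AB1 := mul_gm_inv abc.
exists (gm (a ^+ 2) b (a * c + a ^+ 2 * b ^+ 3)).
by split; [exact/Qtriple_inQ/Qtriple_inv | exact: AB1 | exact: mulmx1C].
Qed.

Lemma Q_frob f r (A : 'M[F4]_3) : inQ A -> inQ (frobmx f r A).
Proof.
move=> /inQP [a [b [c [[a0 abc] ->]]]].
rewrite frobmx_gm //; apply: Qtriple_inQ; rewrite !(frobE card4).
case: ifP => _; split => //; first by rewrite expf_neq0.
by rewrite -!(pFrobenius_autE (F4_pchar2 card4)) -!rmorphXn -!rmorphM -rmorphD abc.
Qed.

Lemma Q1 : @inQ F4 1%:M.
Proof.
rewrite -gm1; apply: Qtriple_inQ.
by split; rewrite ?oner_eq0 // !expr0n /= !mulr0 addr0.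
Qed.

Lemma Q_diag (a : F4) : a != 0 -> inQ (gm a 0 0).
Proof. by move=> a0; apply: Qtriple_inQ; split; rewrite // !expr0n /= !mulr0 addr0. Qed.

Lemma gm_factor (a b c : F4) : Qtriple a b c ->
  gm a b c = gm a 0 0 *m gm 1 (b / a) (c / a) /\ Qtriple 1 (b / a) (c / a).
Proof.
move=> [a0 abc]; split; last first.
  apply/Qtriple1.
  have -> : (c / a) ^+ 2 + c / a = (a * c ^+ 2 + a ^+ 2 * c) / a ^+ 3 by field.
  by rewrite abc expr_div_n.
rewrite mul_gm //; congr gm; rewrite ?mulr1 ?expr0n /= ?mul0r ?addr0 //.
all: by field.
Qed.

Lemma inG_gmul f (x y : 'M[F4]_3 * int) : inG x -> inG y -> inG (gmul f x y).
Proof. by move=> Gx Gy; apply: Q_mul => //; apply: Q_frob. Qed.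

Lemma notinG_gmul f (g x : 'M[F4]_3 * int) :
  inG g -> ~ inG x -> ~ inG (gmul f x g).
Proof.
move=> Gg Gx Gxg; apply: Gx.
have [B [QB gB _]] := Q_inv (Q_frob f x.2 Gg).
by rewrite /inG -[x.1]mulmx1 -gB mulmxA; apply: Q_mul.
Qed.

Lemma inG1 (n : int) : @inG F4 (1%:M, n).
Proof. exact: Q1. Qed.

End QGroup.

Section SemidirectProduct.
Variable F4 : finFieldType.
Hypothesis card4 : #|F4| = 4%N.
Variable f : nat.

Lemma gmul_Q_conj (y : 'M[F4]_3 * int) h : inG y -> inQ h ->
  exists2 u, inQ u & gmul f y (u, 0) = gmul f (h, 0) y.
Proof.
case: y => k n /= Qk Qh; have [k' [Qk' kk' _]] := Q_inv card4 Qk.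
exists (frobmx f n (k' *m h *m k)); first by apply: Q_frob => //; apply: Q_mul => //; apply: Q_mul.
rewrite /gmul /= frobmxK // frobmx0 // addr0 add0r !mulmxA kk' mul1mx.
by [].
Qed.

Lemma frobmx_even r (A : 'M[F4]_3) : ~~ odd `|r| -> frobmx f r A = A.
Proof. by move=> r_even; rewrite frobmxE // oddM (negbTE r_even) andbF. Qed.

Lemma gmul_central2 (y : 'M[F4]_3 * int) : gmul f y (1%:M, 2) = gmul f (1%:M, 2) y.
Proof.
case: y => A n; rewrite /gmul /= frobmx1 // mulmx1 mul1mx frobmx_even //.
by rewrite addrC.
Qed.

Lemma frobmx1_odd (a b c : F4) : odd f ->
  frobmx f 1 (gm a b c) = gm (a ^+ 2) (b ^+ 2) (c ^+ 2).
Proof. by move=> f_odd; rewrite frobmx_gm // !frobE // muln1 f_odd. Qed.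

End SemidirectProduct.

Section Q8Generator.
Variable F4 : finFieldType.
Hypothesis card4 : #|F4| = 4%N.
Variable zeta : F4.
Hypotheses (zeta0 : zeta != 0) (zeta1 : zeta != 1).

Local Notation X := (gm 1 1 zeta).
Local Notation zz := (F4_zeta_sqr card4 zeta0 zeta1).

Lemma gmX_sqr : X *m X = gm 1 0 1.
Proof.
rewrite mul_gm //; congr gm; rewrite ?expr1n ?mulr1 ?mul1r ?F4_addxx //.
by rewrite addrAC F4_addxx // add0r.
Qed.

Lemma gmX_cube : gm 1 0 1 *m X = gm 1 1 (zeta ^+ 2).
Proof.
rewrite mul_gm //; congr gm; rewrite ?expr1n ?expr0n ?mulr1 ?mul1r ?mul0r ?add0r ?addr0 //.
by rewrite -zz addrCA F4_addxx // addr0.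
Qed.

Lemma gm101_sqr : gm 1 0 1 *m gm 1 0 1 = 1%:M :> 'M[F4]_3.
Proof.
rewrite -gm1 mul_gm //; congr gm; rewrite ?expr1n ?expr0n ?mulr1 ?mul1r ?mul0r ?addr0 //.
exact: F4_addxx.
Qed.

Lemma gmX_conj : X *m gm 1 zeta zeta = gm 1 (zeta ^+ 2) (zeta ^+ 2).
Proof.
rewrite mul_gm //; congr gm; rewrite ?expr1n ?mulr1 ?mul1r //.
  by rewrite -zz addrCA F4_addxx // addr0.
by rewrite addrAC F4_addxx // add0r.
Qed.

Lemma gm_diag_sqr : gm zeta 0 0 *m gm zeta 0 0 = gm (zeta ^+ 2) 0 0.
Proof. by rewrite mul_gm // !mul0r !mulr0 !addr0 expr2. Qed.

Lemma gm_diag_cube : gm zeta 0 0 *m gm (zeta ^+ 2) 0 0 = 1%:M.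
Proof. by rewrite mul_gm // -gm1 !mul0r !mulr0 !addr0 -exprS F4_expr3. Qed.

Lemma gm_diag_conj b c :
  gm (zeta ^+ 2) 0 0 *m gm 1 b c *m gm zeta 0 0 = gm 1 (zeta * b) c.
Proof.
rewrite !mul_gm //; congr gm; rewrite ?expr0n /= ?mulr0 ?mul0r ?addr0 ?add0r.
- by rewrite mulr1 -exprSr F4_expr3.
- by rewrite mulrAC -exprD F4_expr4 // mulrC.
- by rewrite mulrAC -exprSr F4_expr3 // mul1r.
Qed.

Lemma gmX_expr k : let M := X ^+ k in
  [\/ M = 1%:M, M = X, M = gm 1 0 1 | M = gm 1 1 (zeta ^+ 2)].
Proof.
elim: k => [|k IH] /=; first by rewrite expr0; constructor.
rewrite exprSr -mulmxE; case: IH => ->.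
- by rewrite mul1mx; constructor.
- by rewrite gmX_sqr; constructor.
- by rewrite gmX_cube; constructor.
- by rewrite -gmX_cube -mulmxA gmX_sqr gm101_sqr; constructor.
Qed.

Lemma gm_zeta_notin_C4 : ~ inC4 zeta (gm 1 zeta zeta).
Proof.
case=> k /(congr1 (fun M : 'M[F4]_3 => M 0 1)).
case: (gmX_expr k) => -> /=; rewrite !mxE /= => zE.
- by move: zeta0; rewrite zE eqxx.
- by move: zeta1; rewrite zE eqxx.
- by move: zeta0; rewrite zE eqxx.
- by move: zeta1; rewrite zE eqxx.
Qed.

Lemma Q_X : inQ X.
Proof. by apply/Qtriple_inQ/Qtriple1; rewrite zz expr1n. Qed.

Section Abelianization.
Variable A : pzRingType.
Variable mu : 'M[F4]_3 -> A.
Hypothesis mu1 : mu 1%:M = 1.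
Hypothesis muM : forall x y, inQ x -> inQ y -> mu (x *m y) = mu x * mu y.
Hypothesis mu_diag : mu (gm zeta 0 0) = 1.

Let Qdiag : inQ (gm zeta 0 0) := Q_diag zeta0.
Let Qdiag2 : inQ (gm (zeta ^+ 2) 0 0) := Q_diag (expf_neq0 2 zeta0).
Let QX : inQ X := Q_X.

Lemma mu_diag2 : mu (gm (zeta ^+ 2) 0 0) = 1.
Proof. by rewrite -gm_diag_sqr muM // mu_diag mul1r. Qed.

Lemma mu_zeta_b b c : c ^+ 2 + c = b ^+ 3 -> mu (gm 1 (zeta * b) c) = mu (gm 1 b c).
Proof.
move=> /Qtriple1 /Qtriple_inQ Qbc; have := Q_mul card4 Qdiag2 Qbc.
by rewrite -gm_diag_conj => Qc2bc; rewrite !muM // mu_diag2 mu_diag mul1r mulr1.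
Qed.

(* [X] times its conjugate [gm 1 zeta zeta] is conjugate to [X ^+ 3], so [mu X ^+ 2 = mu X ^+ 3]. *)
Lemma mu_X : mu X = 1.
Proof.
have Q101 : @inQ F4 (gm 1 0 1) by rewrite -gmX_sqr; apply: Q_mul.
have QY : inQ (gm 1 zeta zeta) by apply/Qtriple_inQ/Qtriple1; rewrite zz F4_expr3.
set t := mu X.
have t2 : mu (@gm F4 1 0 1) = t ^+ 2 by rewrite -gmX_sqr muM.
have t3 : mu (gm 1 1 (zeta ^+ 2)) = t ^+ 3 by rewrite -gmX_cube muM // t2 -exprSr.
have t4 : t ^+ 4 = 1 by rewrite -mu1 -gm101_sqr muM // t2 -exprD.
have tY : mu (gm 1 zeta zeta) = t by rewrite -{1}[zeta]mulr1 mu_zeta_b // expr1n zz.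
have c2 : (zeta ^+ 2) ^+ 2 + zeta ^+ 2 = 1 by rewrite F4_sqrK // addrC zz.
have t23 : t ^+ 2 = t ^+ 3.
  rewrite -t3 expr2 -{2}tY -muM // gmX_conj {1}expr2 -{2}[zeta]mulr1.
  by rewrite !mu_zeta_b // c2 ?mulr1 ?expr1n ?F4_expr3.
by rewrite -[t]mulr1 -t4 -exprS -[5%N]/(3 + 2)%N exprD -t23 -exprD t4.
Qed.

Lemma mu_Q8 b c : c ^+ 2 + c = b ^+ 3 -> mu (gm 1 b c) = 1.
Proof.
have [-> | b0] := eqVneq b 0.
  rewrite expr0n => /(F4_sqr_add0 card4) [] ->; first by rewrite gm1.
  by rewrite -gmX_sqr muM // mu_X mulr1.
move=> bc; have c1 : c ^+ 2 + c = 1 by rewrite bc F4_expr3.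
have -> : mu (gm 1 b c) = mu (gm 1 1 c).
  have cz : c ^+ 2 + c = (zeta * 1) ^+ 3 by rewrite c1 mulr1 F4_expr3.
  have c1' : c ^+ 2 + c = 1 ^+ 3 by rewrite c1 expr1n.
  case: (F4_zeta_cases card4 zeta0 zeta1 b) => bE; rewrite bE in b0 *.
  - by rewrite eqxx in b0.
  - by [].
  - by rewrite -[zeta]mulr1 mu_zeta_b.
  - by rewrite expr2 -{2}[zeta]mulr1 !mu_zeta_b.
case/(F4_sqr_add1 card4 zeta0 zeta1): c1 => ->; first exact: mu_X.
have QX2 := Q_mul card4 QX QX.
by rewrite -gmX_cube -gmX_sqr !muM // mu_X !mulr1.
Qed.

Lemma Q_morph_trivial x : inQ x -> mu x = 1.
Proof.
move=> /inQP [a [b [c [[a0 abc] ->]]]].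
have [-> Q1bc] := gm_factor card4 (conj a0 abc).
have Qa := Q_diag a0; have Qbc := Qtriple_inQ Q1bc.
rewrite muM // mu_Q8 ?mulr1; last exact/Qtriple1.
case: (F4_zeta_cases card4 zeta0 zeta1 a) => aE; rewrite aE in a0 *.
- by rewrite eqxx in a0.
- by rewrite gm1.
- exact: mu_diag.
- exact: mu_diag2.
Qed.

End Abelianization.
End Q8Generator.

Section Matrix2.
Variable R : fieldType.
Implicit Types A B : 'M[R]_2.

Lemma det_mx2 A : \det A = A 0 0 * A 1 1 - A 0 1 * A 1 0.
Proof.
rewrite (expand_det_row _ 0) !big_ord_recl big_ord0 addr0 /cofactor !det_mx11 !mxE.
rewrite /= expr0 expr1 !mul1r mulN1r mulrN.
by congr (_ * A _ _ - A _ _ * A _ _); apply: val_inj.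
Qed.

Lemma lift0_ord2 : lift ord0 ord0 = 1 :> 'I_2.
Proof. exact: val_inj. Qed.

Lemma mxtrace_mx2 A : \tr A = A 0 0 + A 1 1.
Proof. by rewrite /mxtrace !big_ord_recl big_ord0 addr0 lift0_ord2. Qed.

Lemma mulmx2E A B i j : (A *m B) i j = A i 0 * B 0 j + A i 1 * B 1 j.
Proof. by rewrite !mxE !big_ord_recl big_ord0 addr0 lift0_ord2. Qed.

Lemma ord2P (i : 'I_2) : i = 0 \/ i = 1.
Proof. by case: i => [[|[|k]] lt_i2]; [left | right | by []]; apply: val_inj. Qed.

Lemma mx2P A B : A 0 0 = B 0 0 -> A 0 1 = B 0 1 -> A 1 0 = B 1 0 ->
  A 1 1 = B 1 1 -> A = B.
Proof.
move=> e00 e01 e10 e11; apply/matrixP => i j.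
by case: (ord2P i) => ->; case: (ord2P j) => ->.
Qed.

Lemma Cayley_Hamilton_mx2 A : A *m A = \tr A *: A - \det A *: 1%:M.
Proof. by apply: mx2P; rewrite !mulmx2E !mxE /= mxtrace_mx2 det_mx2 /=; ring. Qed.

Lemma det_mx2_order3 A : 3%:R != 0 :> R ->
  A *m A *m A = 1%:M -> \tr A = -1 -> \det A = 1.
Proof.
move=> three0 A3 trA.
have A3E : A *m A *m A = (1 - \det A) *: A + \det A *: 1%:M.
  rewrite Cayley_Hamilton_mx2 trA mulmxBl -!scalemxAl Cayley_Hamilton_mx2 trA mul1mx.
  by apply: mx2P; rewrite !mxE /=; ring.
have [/eqP|d1] := eqVneq (1 - \det A) 0; first by rewrite subr_eq0 eq_sym => /eqP.
suff A1 : A = 1%:M.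
  by move: trA three0; rewrite A1 mxtrace1 -[3%N]/(2 + 1)%N natrD => ->; rewrite addNr eqxx.
apply: (scalerI d1); move: A3E; rewrite A3 => /(congr1 (fun M => M - \det A *: 1%:M)).
by rewrite addrK -{1}[1%:M]scale1r -scalerBl => <-.
Qed.

Lemma sqr_scalar_mx2 A (k : R) :
  A *m A = k%:M -> \det A = - k \/ A = (A 0 0)%:M.
Proof.
move=> A2; have e i j : (A *m A) i j = (k%:M : 'M[R]_2) i j by rewrite A2.
have := e 0 0; have := e 0 1; have := e 1 0; have := e 1 1.
rewrite !mulmx2E !mxE /= ?mulr1n ?mulr0n => e11 e10 e01 e00.
have [tr0 | tr_neq0] := eqVneq (A 0 0 + A 1 1) 0.
  left; rewrite det_mx2 -e00.
  have -> : A 1 1 = - A 0 0 by apply/eqP; rewrite -addr_eq0 addrC tr0.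
  by ring.
right; apply: mx2P; rewrite !mxE /= ?mulr1n ?mulr0n //.
- apply: (mulIf tr_neq0); rewrite mul0r -e01; ring.
- apply: (mulIf tr_neq0); rewrite mul0r -e10; ring.
- apply: (mulIf tr_neq0); apply/eqP; rewrite -subr_eq0.
  rewrite (_ : _ - _ = (A 1 0 * A 0 1 + A 1 1 * A 1 1) - (A 0 0 * A 0 0 + A 0 1 * A 1 0)).
    by rewrite e11 e00 subrr.
  by ring.
Qed.

End Matrix2.

Lemma int_morph_exprz (R : fieldType) (E : int -> R) : E 0 = 1 ->
  (forall m n, E (m + n) = E m * E n) -> forall n, E n = E 1 ^ n.
Proof.
move=> E0 ED.
have Enat (k : nat) : E k = E 1 ^+ k.
  by elim: k => [|k IH]; rewrite ?E0 // -addn1 PoszD ED IH addn1 exprSr.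
case=> k; first exact: Enat.
have Ek1 : E (Negz k) * E 1 ^+ k.+1 = 1 by rewrite -Enat -ED NegzE addNr.
have Ek_neq0 : E 1 ^+ k.+1 != 0.
  by apply/eqP => Ek0; move: Ek1; rewrite Ek0 mulr0 => /eqP; rewrite eq_sym oner_eq0.
by apply: (mulIf Ek_neq0); rewrite Ek1 NegzE -invr_expz mulVf.
Qed.

Lemma det_conjmx (R : comUnitRingType) n (P M : 'M[R]_n) :
  P \in unitmx -> \det (invmx P *m M *m P) = \det M.
Proof. by move=> Pu; rewrite !det_mulmx det_inv mulrAC mulVr ?mul1r // -unitmxE. Qed.

Lemma expr2_exprz_sqrt_m2 (R : fieldType) (s : R) f :
  s ^+ 2 = -2 -> ~~ odd f -> (s ^ (- f%:Z)) ^+ 2 = (2 ^ f)%:R^-1.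
Proof.
move=> s2 f_even; rewrite -exprz_inv -exprM mulnC exprM exprVn s2.
by rewrite -mulN1r exprVn exprMn -signr_odd (negbTE f_even) mul1r natrX.
Qed.

Section CharactersOfG.
Variable F4 : finFieldType.
Hypothesis card4 : #|F4| = 4%N.
Variables (f : nat) (zeta : F4).
Hypotheses (zeta0 : zeta != 0) (zeta1 : zeta != 1).
Variables (R : fieldType) (D : 'M[F4]_3 * int -> R).
Hypothesis D1 : D (gone F4) = 1.
Hypothesis DM : forall x y, inG x -> inG y -> D (gmul f x y) = D x * D y.
Hypothesis D_diag : D (gm zeta 0 0, 0) = 1.

Lemma G_char_exprz g : inG g -> D g = D (1%:M, 1) ^ g.2.
Proof.
case: g => h n /= Qh.
have DQ x : inQ x -> D (x, 0) = 1.
  apply: (Q_morph_trivial card4 zeta0 zeta1 (mu := fun x => D (x, 0))) => //.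
  by move=> x1 x2 Qx1 Qx2; rewrite /= -DM // gmul0.
rewrite -(gmul_split card4 f h n) DM ?DQ ?mul1r //; last exact: inG1.
apply: (int_morph_exprz (E := fun m => D (1%:M, m))) => // m m'.
by rewrite -DM ?gmul1n //; exact: inG1.
Qed.

End CharactersOfG.

Lemma det_tau_q_even (R : fieldType) (char0 : [pchar R] =i pred0)
  (F4 : finFieldType) (card4 : #|F4| = 4%N) (f : nat)
  (zeta : F4) (zeta0 : zeta != 0) (zeta1 : zeta != 1)
  (phi : 'M[F4]_3 -> R) (s : R) (s2 : s ^+ 2 = -2) (f_even : ~~ odd f)
  (rho : 'M[F4]_3 * int -> 'M[R]_2) : is_tau_q_even f phi s rho ->
  forall g, inG g -> \det (rho g) = (2 ^ f)%:R ^ (- g.2).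
Proof.
move=> [[rho1 rhoM] [tau [[[tau1 tauM] _ _ tr_tau] [P [Pu rhoQ]]]] rho_t] g Gg.
have Qz := Q_diag zeta0.
rewrite (@G_char_exprz _ card4 f _ zeta0 zeta1 _ (fun g => \det (rho g))) //=.
- by rewrite -gm1 rho_t det_scalar expr2_exprz_sqrt_m2 // exprz_inv.
- by rewrite rho1 det1.
- by move=> x y Gx Gy; rewrite rhoM // det_mulmx.
rewrite rhoQ // det_conjmx //; apply: det_mx2_order3 (tr_tau _ zeta0 zeta1).
  by rewrite ((pcharf0P R).1 char0).
have Qz2 := Q_mul card4 Qz Qz.
by rewrite -!tauM // -mulmxA gm_diag_sqr // gm_diag_cube.
Qed.

Section KernelOfPsi.
Variable R : fieldType.
Variable F4 : finFieldType.
Hypothesis card4 : #|F4| = 4%N.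
Variables (f : nat) (zeta : F4) (phi1 : 'M[F4]_3 * int -> R).
Variable Psi : ('M[F4]_3 * int -> R) -> ('M[F4]_3 * int -> R).
Hypothesis Psi_equiv : forall g v, inG g -> inInd f (inC zeta) phi1 v ->
  Psi (gact f g v) = gact f g (Psi v).
Variable b : 'I_2 -> 'M[F4]_3 * int -> R.
Hypothesis b_basis : is_ker_basis f zeta phi1 Psi b.

Definition in_kerPsi (v : 'M[F4]_3 * int -> R) :=
  inInd f (inC zeta) phi1 v /\ Psi v = (fun _ => 0).

Lemma gact_kerPsi g v : inG g -> in_kerPsi v -> in_kerPsi (gact f g v).
Proof.
move=> Gg [[v0 vC] Psi_v]; split; [split|].
- by move=> x Gx; rewrite /gact v0 //; apply: notinG_gmul.
- by move=> h x Ch Gx; rewrite /gact gmulA // vC //; apply: inG_gmul.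
- by rewrite Psi_equiv // Psi_v.
Qed.

Lemma sum_scalar_mx2 (k : R) j y : \sum_i (k%:M : 'M[R]_2) i j * b i y = k * b j y.
Proof.
rewrite !big_ord_recl big_ord0 addr0 !mxE lift0_ord2.
by case: (ord2P j) => -> /=; rewrite ?mulr1n ?mulr0n ?mul0r ?addr0 ?add0r.
Qed.

Lemma action_matrix_uniq g M M' :
  is_action_matrix f b g M -> is_action_matrix f b g M' -> M = M'.
Proof.
case: b_basis => _ b_free _ bM bM'; apply/matrixP => i j; apply/eqP.
rewrite -subr_eq0; apply/eqP/(b_free (fun i => M i j - M' i j)).
apply: functional_extensionality => y.
under eq_bigr do rewrite mulrBl.
by rewrite sumrB -(congr1 (fun v => v y) (bM j)) -(congr1 (fun v => v y) (bM' j)) subrr.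
Qed.

Lemma action_matrix_exists g : inG g -> exists M, is_action_matrix f b g M.
Proof.
case: b_basis => b_ker _ b_span Gg.
have [c0 e0] := b_span _ (gact_kerPsi Gg (b_ker 0)).
have [c1 e1] := b_span _ (gact_kerPsi Gg (b_ker 1)).
exists (\matrix_(i, j) (if j == 0 then c0 i else c1 i)) => j.
by case: (ord2P j) => ->; rewrite ?e0 ?e1; apply: functional_extensionality => y;
  apply: eq_bigr => i _; rewrite mxE.
Qed.

Lemma action_matrix_mul g h M N :
  is_action_matrix f b g M -> is_action_matrix f b h N ->
  is_action_matrix f b (gmul f g h) (M *m N).
Proof.
move=> bM bN j; apply: functional_extensionality => y.
rewrite /gact -gmulA //.
have := congr1 (fun v => v (gmul f y g)) (bN j); rewrite /gact /= => ->.
have bMy i : b i (gmul f y g) = \sum_k M k i * b k y.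
  exact: (congr1 (fun v => v y) (bM i)).
under eq_bigr => i _ do rewrite bMy mulr_sumr.
rewrite exchange_big /=; apply: eq_bigr => k _; rewrite mxE mulr_suml.
by apply: eq_bigr => i _; rewrite mulrCA mulrA.
Qed.

Lemma action_matrix_one : is_action_matrix f b (gone F4) 1%:M.
Proof.
move=> j; apply: functional_extensionality => y.
by rewrite /gact gmulg1 // sum_scalar_mx2 mul1r.
Qed.

(* The matrix of [g] acting on [ker Psi] in the basis [b]; junk outside G. *)
Definition tauq g : 'M[R]_2 := epsilon (inhabits 0) (is_action_matrix f b g).

Lemma tauqP g : inG g -> is_action_matrix f b g (tauq g).
Proof. by move=> Gg; apply: epsilon_spec; apply: action_matrix_exists. Qed.

Lemma tauq_eq g M : inG g -> is_action_matrix f b g M -> tauq g = M.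
Proof. by move=> Gg; apply: action_matrix_uniq; apply: tauqP. Qed.

Lemma tauqM g h : inG g -> inG h -> tauq (gmul f g h) = tauq g *m tauq h.
Proof.
by move=> Gg Gh; apply: tauq_eq; [apply: inG_gmul | apply: action_matrix_mul; apply: tauqP].
Qed.

Lemma tauq1 : tauq (gone F4) = 1%:M.
Proof. by apply: tauq_eq; [exact: Q1 | exact: action_matrix_one]. Qed.

Lemma tauq_central z : inC zeta z -> (forall y, gmul f y z = gmul f z y) ->
  tauq z = (phi1 z)%:M.
Proof.
move=> Cz z_central; apply: tauq_eq; first exact: Cz.1.1.
move=> j; apply: functional_extensionality => y; rewrite sum_scalar_mx2 /gact.
case: b_basis => b_ker _ _; have [[bj0 bjC] _] := b_ker j.
have [Gy | Gy] := classic (inG y); first by rewrite z_central bjC.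
by rewrite !bj0 ?mulr0 //; apply: notinG_gmul Cz.1.1 Gy.
Qed.


Hypothesis char0 : [pchar R] =i pred0.
Hypothesis f_odd : odd f.
Hypotheses (zeta0 : zeta != 0) (zeta1 : zeta != 1).
Variables (s eta : R).
Local Notation q := ((2 ^ f)%:R : R).
Hypothesis s2 : s ^+ 2 = -2.
Hypothesis eta_root : eta ^+ 2 + s ^+ f.+1 * eta + q = 0.
Hypothesis phi1_char : is_character (inC zeta) (gmul f) phi1.
Hypothesis phi1_w : phi1 (gm 1 zeta zeta, 1) = eta / q.
Hypothesis phi1_z : phi1 (gm 1 0 0, 2) = - q^-1.

Local Notation X := (gm 1 1 zeta).
Local Notation c := (gm zeta 0 0).
Local Notation c2 := (gm (zeta ^+ 2) 0 0).
Local Notation t := (tauq (1%:M, 1)).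

Let Qc : inQ c := Q_diag zeta0.
Let Qc2 : inQ c2 := Q_diag (expf_neq0 2 zeta0).
Let QX : inQ X := Q_X card4 zeta0 zeta1.

Lemma q_neq0 : q != 0.
Proof. by rewrite ((pcharf0P R).1 char0) expn_eq0. Qed.

Lemma inC_central2 : inC zeta (1%:M, 2).
Proof.
split; first by split; [exact: Q1 | exists 0, 0; rewrite gm1].
by exists 0%N; rewrite expr0.
Qed.

Lemma tauq_t_sqr : t *m t = (- q^-1)%:M.
Proof.
have C2 := inC_central2; have G1 := @inG1 F4 1.
rewrite -tauqM // gmul1n // tauq_central //; last exact: gmul_central2.
by rewrite -gm1 phi1_z.
Qed.

Lemma det_t_neq0 : \det t != 0.
Proof.
apply/eqP => t0; have := congr1 determinant tauq_t_sqr.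
by rewrite det_mulmx t0 mul0r det_scalar sqrrN => /esym/eqP; rewrite sqrf_eq0 invr_eq0 (negbTE q_neq0).
Qed.

Lemma gmul_t_diag : gmul f (1%:M, 1) (c, 0) = gmul f (c2, 0) (1%:M, 1).
Proof. by rewrite /gmul /= frobmx1_odd // frobmx1 // mul1mx mulmx1 expr0n. Qed.

Lemma gmul_w_sqr : gmul f (gm 1 zeta zeta, 1) (gm 1 zeta zeta, 1) = (X, 2).
Proof.
rewrite /gmul /= frobmx1_odd // mul_gm //; congr (_, _); congr gm; rewrite !expr1n ?mul1r ?mulr1 //.
  by rewrite F4_zeta_sqr.
by rewrite F4_sqrK // -expr2 F4_addxx // add0r.
Qed.

Lemma tauq_diag_sqr : tauq (c2, 0) = tauq (c, 0) *m tauq (c, 0).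
Proof. by rewrite -tauqM // gmul0 // gm_diag_sqr. Qed.

Lemma tauq_diag_cube : tauq (c, 0) *m tauq (c2, 0) = 1%:M.
Proof. by rewrite -tauqM // gmul0 // gm_diag_cube // -tauq1. Qed.

Lemma tauq_t_diag : t *m tauq (c, 0) = tauq (c2, 0) *m t.
Proof. by have G1 := @inG1 F4 1; rewrite -!tauqM // gmul_t_diag. Qed.

Lemma det_tauq_diag : \det (tauq (c, 0)) = 1.
Proof.
have := congr1 determinant tauq_t_diag.
rewrite !det_mulmx tauq_diag_sqr det_mulmx mulrC => /(mulIf det_t_neq0) dd.
have d_neq0 : \det (tauq (c, 0)) != 0.
  apply/eqP => d0; have := congr1 determinant tauq_diag_cube.
  by rewrite det_mulmx d0 mul0r det1 => /eqP; rewrite eq_sym oner_eq0.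
by apply: (mulfI d_neq0); rewrite mulr1.
Qed.

Lemma inC_X : inC zeta (X, 0).
Proof. by split; [split; [exact: QX | exists 1, zeta] | exists 1%N; rewrite expr1]. Qed.

Lemma inC_w : inC zeta (gm 1 zeta zeta, 1).
Proof.
split; last exact: gm_zeta_notin_C4.
split; last by exists zeta, zeta.
by apply/Qtriple_inQ/Qtriple1; rewrite F4_zeta_sqr // F4_expr3.
Qed.

Lemma s_neq0 : s != 0.
Proof.
apply: contra_eq_neq s2 => ->.
by rewrite expr0n eq_sym oppr_eq0 ((pcharf0P R).1 char0).
Qed.

(* phi_1(w)^2 = -phi_1(X, 0) / q for w = (g(1,zeta,zeta), 1), so phi_1(X, 0) = 1
   would give eta^2 = -q, and then the quadratic for eta forces eta = 0. *)
Lemma phi1_X_neq1 : phi1 (X, 0) != 1.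
Proof.
apply/eqP => phiX1; case: phi1_char => _ phi1M.
have Cw := inC_w; have CX := inC_X; have C2 := inC_central2.
have ww : phi1 (gm 1 zeta zeta, 1) * phi1 (gm 1 zeta zeta, 1) = - q^-1.
  rewrite -phi1M // gmul_w_sqr -(gmul_split card4 f) phi1M //.
  by rewrite phiX1 mul1r -gm1 phi1_z.
have eta2 : eta ^+ 2 = - q.
  have q0 := q_neq0.
  have -> : eta ^+ 2 = (eta / q * (eta / q)) * q ^+ 2 by field.
  by rewrite -phi1_w ww; field.
move: eta_root; rewrite eta2 addrAC addNr add0r => /eqP.
rewrite mulf_eq0 expf_eq0 (negbTE s_neq0) andbF /= => /eqP eta0.
by move: eta2; rewrite eta0 expr0n /= => /eqP; rewrite eq_sym oppr_eq0 (negbTE q_neq0).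
Qed.

(* (X, 0) lies in C and all its G-conjugates lie in Q x 0: if Q acted
   trivially, b 0 would be invariant under them, hence zero as phi_1(X, 0) != 1. *)
Lemma tauq_Q_nontrivial : ~ (forall h, inQ h -> tauq (h, 0) = 1%:M).
Proof.
move=> tauq_triv; case: b_basis => b_ker b_free _; have [[b0_out b0C] _] := b_ker 0.
have b0_0 y : b 0 y = 0.
  have [Gy | /b0_out //] := classic (inG y).
  have [u Qu yu] := gmul_Q_conj card4 f Gy QX.
  have : b 0 (gmul f (X, 0) y) = b 0 y.
    rewrite -yu; have := congr1 (fun v => v y) (@tauqP (u, 0) Qu 0).
    by rewrite /gact /= => ->; rewrite tauq_triv // sum_scalar_mx2 mul1r.
  have CX := inC_X; rewrite b0C // => /eqP; rewrite -subr_eq0 -{2}[b 0 y]mul1r -mulrBl.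
  by rewrite mulf_eq0 subr_eq0 (negbTE phi1_X_neq1) => /eqP.
suff /b_free/(_ 0)/eqP : (fun y => \sum_i (i == 0)%:R * b i y) = (fun _ => 0).
  by rewrite eqxx oner_eq0.
apply: functional_extensionality => y.
by rewrite !big_ord_recl big_ord0 b0_0 /= mul0r mulr0 !addr0.
Qed.

Lemma tauq_t_nonscalar (a : R) : t <> a%:M.
Proof.
move=> ta; apply: tauq_Q_nontrivial.
apply: (Q_morph_trivial card4 zeta0 zeta1 (mu := fun h => tauq (h, 0))) => /=.
- exact: tauq1.
- by move=> x y Qx Qy; rewrite -mulmxE -tauqM // gmul0.
have a_neq0 : a != 0 by apply: contra_neq det_t_neq0; rewrite ta => ->; rewrite det_scalar expr0n.
have tc2 : tauq (c, 0) = tauq (c2, 0).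
  apply: (scalerI a_neq0); rewrite -mul_scalar_mx -mul_mx_scalar -ta.
  exact: tauq_t_diag.
by rewrite {1}tc2 tauq_diag_sqr {2}tc2 tauq_diag_cube.
Qed.

Lemma det_tauq_t : \det t = q^-1.
Proof.
by case: (sqr_scalar_mx2 tauq_t_sqr) => [-> | /tauq_t_nonscalar //]; rewrite opprK.
Qed.

Lemma det_tauq g : inG g -> \det (tauq g) = q ^ (- g.2).
Proof.
move=> Gg; rewrite -exprz_inv -det_tauq_t.
apply: (@G_char_exprz _ card4 f _ zeta0 zeta1 _ (fun g => \det (tauq g))) => //=.
- by rewrite tauq1 det1.
- by move=> x y Gx Gy; rewrite tauqM // det_mulmx.
- exact: det_tauq_diag.
Qed.

End KernelOfPsi.

Theorem lemma3p4
  (R : closedFieldType) (char0 : [pchar R] =i pred0)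
  (F4 : finFieldType) (card4 : #|F4| = 4%N)
  (f : nat) (f_ge1 : (1 <= f)%N)
  (zeta : F4) (zeta0 : zeta != 0) (zeta1 : zeta != 1)
  (phi : 'M[F4]_3 -> R) (phi_faithful : faithful_char_C4 zeta phi)
  (s : R) (s2 : s ^+ 2 = -2) :
  let q : R := (2 ^ f)%:R in
  (* f even *)
  (~~ odd f ->
     forall rho : 'M[F4]_3 * int -> 'M[R]_2,
       is_tau_q_even f phi s rho ->
       forall g : 'M[F4]_3 * int, inG g -> \det (rho g) = q ^ (- g.2)) /\
  (* f odd *)
  (odd f ->
     forall (eta : R), eta ^+ 2 + s ^+ f.+1 * eta + q = 0 ->
     forall phi1 phi2 : 'M[F4]_3 * int -> R,
       is_phi1 f zeta eta phi1 -> is_phi2 f phi s phi2 ->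
     forall Psi, is_Psi f zeta phi1 phi2 Psi ->
     forall b, is_ker_basis f zeta phi1 Psi b ->
     forall (g : 'M[F4]_3 * int) (M : 'M[R]_2), inG g ->
       is_action_matrix f b g M -> \det M = q ^ (- g.2)).
Proof.
(* Of the data defining tau_q only the G-equivariance of Psi and the values of
   phi_1 enter. *)
move=> q; split; first exact: (det_tau_q_even char0 card4 zeta0 zeta1 s2).
move=> f_odd eta eta_root phi1 phi2 [phi1_char phi1_w phi1_z] _ Psi [_ _ Psi_equiv _].
move=> b b_basis g M Gg bM; rewrite -(tauq_eq card4 Psi_equiv b_basis Gg bM).
exact: (det_tauq card4 Psi_equiv b_basis char0 f_odd zeta0 zeta1 s2 eta_root).
Qed.
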